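(* Let $(\mathcal M,g_{ab})$ be a 4-dimensional Lorentzian manifold with a Killing vector $\vec\zeta$, and suppose that on an open set the Ernst one-form admits a potential $\sigma'$ ($\sigma_a=\nabla_a\sigma'$) with $\sigma'\neq0$. Then, on that set, $$\mathcal S_{abc}=\gamma_{a[b}\mathcal S(\sigma')_{c]mrd}\zeta^m\mathcal F^{rd}+4\zeta^m\zeta^r\mathcal S(\sigma')_{mar[c}\sigma_{b]},$$ i.e. the space-time Simon tensor is obtained by replacing $\mathcal C_{abcd}$ by $\mathcal S(\sigma')_{abcd}$ in its definition (in particular this expression is independent of the choice of $\sigma'$).
   Context: $(\mathcal M,g_{ab})$ is a 4-dimensional Lorentzian manifold (signature $(-,+,+,+)$) with volume form $\eta_{abcd}$ and Weyl tensor $C_{abcd}$. For a Killing vector $\vec\zeta$: $\lambda=\zeta_a\zeta^a$, $F_{ab}=\nabla_a\zeta_b$, $F^*_{ab}=\tfrac12\eta_{abcd}F^{cd}$, $\mathcal F_{ab}=F_{ab}+iF^*_{ab}$, $\mathcal F\cdot\mathcal F=\mathcal F_{ab}\mathcal F^{ab}$; $C^*_{abcd}=\tfrac12\eta_{cdpq}C_{ab}{}^{pq}$, $\mathcal C_{abcd}=C_{abcd}+iC^*_{abcd}$; Ernst one-form $\sigma_a=2\mathcal F_{ab}\zeta^b$; $\gamma_{ab}=\zeta_a\zeta_b-\lambda g_{ab}$; $\mathcal I_{abcd}=\tfrac14(i\eta_{abcd}+g_{ac}g_{bd}-g_{ad}g_{bc})$; $\mathcal Q_{abcd}=6(\mathcal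 F_{ab}\mathcal F_{cd}-\tfrac13\mathcal I_{abcd}\,\mathcal F\cdot\mathcal F)$; Mars–Simon tensor $\mathcal S(\sigma')_{abcd}=\mathcal C_{abcd}+\frac1{\sigma'}\mathcal Q_{abcd}$; space-time Simon tensor $\mathcal S_{abc}=\gamma_{a[b}\mathcal C_{c]mrd}\zeta^m\mathcal F^{rd}+4\zeta^m\zeta^r\mathcal C_{mar[c}\sigma_{b]}$. *)

(* Pointwise (frame) tensor algebra at one point of a
   4-dimensional Lorentzian manifold, in an orthonormal frame. *)
From HB Require Import structures.
From mathcomp Require Import all_boot all_order all_algebra.
Set Implicit Arguments. Unset Strict Implicit. Unset Printing Implicit Defensive.
Import Order.TTheory GRing.Theory Num.Theory.
Local Open Scope ring_scope.

Section Tensors.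
Variable K : numClosedFieldType.  (* scalars: complex-like field; real tensors have Num.real components *)

Definition idx := 'I_4.
Definition t0 : idx := ord0.

(* Orthonormal frame: g_ab = g^ab = diag(-1,1,1,1) *)
Definition sgn (a : idx) : K := if a == t0 then -1 else 1.
Definition gm (a b : idx) : K := if a == b then sgn a else 0.

(* volume form with lower indices, eta_{0123} = +1 *)
Definition vol (a b c d : idx) : K :=
  \det (\matrix_(i < 4, j < 4) ((nth t0 [:: a; b; c; d] i == j)%:R : K)).

Variables (zeta : idx -> K)
          (F : idx -> idx -> K)                  (* F_ab = nabla_a zeta_b *)
          (W : idx -> idx -> idx -> idx -> K).   (* Weyl tensor C_abcd *)

Definition zetaU (a : idx) : K := sgn a * zeta a.
Definition lam : K := \sum_(a < 4) zetaU a * zeta a.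

Definition Fstar (a b : idx) : K :=
  2^-1 * \sum_(c < 4) \sum_(d < 4) vol a b c d * (sgn c * sgn d * F c d).
Definition calF (a b : idx) : K := F a b + 'i * Fstar a b.
Definition calFU (a b : idx) : K := sgn a * sgn b * calF a b.
Definition FdotF : K := \sum_(a < 4) \sum_(b < 4) calF a b * calFU a b.

Definition Wstar (a b c d : idx) : K :=
  2^-1 * \sum_(p < 4) \sum_(q < 4) vol c d p q * (sgn p * sgn q * W a b p q).
Definition calC (a b c d : idx) : K := W a b c d + 'i * Wstar a b c d.

Definition sigma (a : idx) : K := 2%:R * \sum_(b < 4) calF a b * zetaU b.

Definition gam (a b : idx) : K := zeta a * zeta b - lam * gm a b.

Definition calI (a b c d : idx) : K :=
  4%:R^-1 * ('i * vol a b c d + gm a c * gm b d - gm a d * gm b c).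

Definition calQ (a b c d : idx) : K :=
  6%:R * (calF a b * calF c d - 3%:R^-1 * calI a b c d * FdotF).

Definition MarsSimon (s : K) (a b c d : idx) : K :=
  calC a b c d + s^-1 * calQ a b c d.

(* The Simon-type expression built from a 4-tensor T:
   gamma_{a[b} T_{c]mrd} zeta^m calF^{rd} + 4 zeta^m zeta^r T_{mar[c} sigma_{b]},
   with X_[bc] = (X_bc - X_cb)/2. *)
Definition simonOf (T : idx -> idx -> idx -> idx -> K) (a b c : idx) : K :=
  let contr (e : idx) := \sum_(m < 4) \sum_(r < 4) \sum_(d < 4)
                            T e m r d * zetaU m * calFU r d in
  let part2 (e f : idx) := \sum_(m < 4) \sum_(r < 4)
                            zetaU m * zetaU r * T m a r e * sigma f in
  2^-1 * (gam a b * contr c - gam a c * contr b)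
  + 4%:R * (2^-1 * (part2 c b - part2 b c)).

Definition SimonTensor (a b c : idx) : K := simonOf calC a b c.

Definition real_vec := forall a, zeta a \is Num.real.
Definition F_real_antisym := forall a b, F a b \is Num.real /\ F a b = - F b a.
Definition is_weyl :=
  (forall a b c d, W a b c d \is Num.real) /\
  (forall a b c d, W a b c d = - W b a c d) /\
  (forall a b c d, W a b c d = - W a b d c) /\
  (forall a b c d, W a b c d = W c d a b) /\
  (forall a b c d, W a b c d + W a c d b + W a d b c = 0) /\
  (forall b d, \sum_(a < 4) \sum_(c < 4) gm a c * W a b c d = 0).
End Tensors.

(* The Simon-type expression simonOf T is linear in the 4-tensor T, so the
   theorem amounts to the vanishing of simonOf Q, a purely algebraic identity
   at one point, valid for every real skew-symmetric F and every vector zeta.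
   Writing G = F + i*F for the self-dual Killing form and S = G.G:
   - the Hodge dual is an involution up to sign, **F = -F (a frame computation
     with the Levi-Civita values of the volume form), hence *G = -i G and
     I_abcd G^cd = G_ab;
   - since eta is alternating, zeta^m zeta^r I_mare = -gamma_ae / 4;
   - with sigma_a = 2 G_ab zeta^b these give the two contractions entering
     simonOf:  Q_emrd zeta^m G^rd = 2 sigma_e S  and
     zeta^m zeta^r Q_mare = 3/2 sigma_a sigma_e + 1/2 gamma_ae S,
     and the antisymmetrisation in simonOf makes the sum cancel. *)
From HB Require Import structures.
From mathcomp Require Import all_boot all_order all_algebra perm ring.
Set Implicit Arguments. Unset Strict Implicit.
Import Order.TTheory GRing.Theory Num.Theory.
Local Open Scope ring_scope.

(* The four frame indices, as explicit ordinals so that matches on them reduce. *)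
Definition o0 : idx := @Ordinal 4 0 isT.
Definition o1 : idx := @Ordinal 4 1 isT.
Definition o2 : idx := @Ordinal 4 2 isT.
Definition o3 : idx := @Ordinal 4 3 isT.

Lemma idx_cases (P : idx -> Prop) : P o0 -> P o1 -> P o2 -> P o3 -> forall i, P i.
Proof.
move=> P0 P1 P2 P3 [[|[|[|[|i]]]] lti] //.
- by rewrite (_ : Ordinal lti = o0) //; apply: val_inj.
- by rewrite (_ : Ordinal lti = o1) //; apply: val_inj.
- by rewrite (_ : Ordinal lti = o2) //; apply: val_inj.
- by rewrite (_ : Ordinal lti = o3) //; apply: val_inj.
Qed.

Lemma sum4 (V : nmodType) (f : idx -> V) :
  \sum_(i < 4) f i = f o0 + f o1 + f o2 + f o3.
Proof.
rewrite !big_ord_recl big_ord0 addr0 !addrA.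
by congr (_ + _ + _ + _); congr f; apply: val_inj.
Qed.

Lemma self_opp_eq0 (K : numDomainType) (x : K) : x = - x -> x = 0.
Proof.
move=> xN; apply/eqP; rewrite -[x == 0]/(false || (x == 0)) -(mulrn_eq0 x 2).
by rewrite mulr2n {1}xN addNr.
Qed.

Section LaplaceExpansion.
Variable R : comNzRingType.

Lemma minor0 n (f : nat -> nat -> R) (j : 'I_n.+1) :
  row' ord0 (col' j (\matrix_(i < n.+1, k < n.+1) f i k))
  = \matrix_(i < n, k < n) f i.+1 (bump j k).
Proof. by apply/matrixP=> i k; rewrite !mxE. Qed.

Lemma det_mx2 (f : nat -> nat -> R) :
  \det (\matrix_(i < 2, j < 2) f i j) = f 0 0 * f 1 1 - f 0 1 * f 1 0.
Proof.
rewrite (expand_det_row _ ord0) !big_ord_recl big_ord0 /cofactor !(minor0 f).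
by rewrite !det_mx11 !mxE /=; ring.
Qed.

Definition det3 (f : nat -> nat -> R) : R :=
  f 0 0 * (f 1 1 * f 2 2 - f 1 2 * f 2 1) - f 0 1 * (f 1 0 * f 2 2 - f 1 2 * f 2 0)
  + f 0 2 * (f 1 0 * f 2 1 - f 1 1 * f 2 0).

Lemma det_mx3 (f : nat -> nat -> R) : \det (\matrix_(i < 3, j < 3) f i j) = det3 f.
Proof.
rewrite (expand_det_row _ ord0) !big_ord_recl big_ord0 /cofactor !(minor0 f).
by rewrite !(det_mx2 (fun x y => f x.+1 (bump _ y))) !mxE /det3 /=; ring.
Qed.

Lemma det_mx4 (f : nat -> nat -> R) : \det (\matrix_(i < 4, j < 4) f i j) =
    f 0 0 * det3 (fun x y => f x.+1 y.+1) - f 0 1 * det3 (fun x y => f x.+1 (bump 1 y))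
  + f 0 2 * det3 (fun x y => f x.+1 (bump 2 y)) - f 0 3 * det3 (fun x y => f x.+1 (bump 3 y)).
Proof.
rewrite (expand_det_row _ ord0) !big_ord_recl big_ord0 /cofactor !(minor0 f).
by rewrite !(det_mx3 (fun x y => f x.+1 (bump _ y))) !mxE /=; ring.
Qed.

Lemma det_xrow n (i j : 'I_n) (A : 'M[R]_n) : i != j -> \det (xrow i j A) = - \det A.
Proof.
by move=> ij; rewrite xrowE det_mulmx det_perm odd_tperm ij expr1 mulN1r.
Qed.
End LaplaceExpansion.

Definition levi_civita (a b c d : nat) : int :=
  match a, b, c, d with
  | 0,1,2,3 => 1 | 0,1,3,2 => -1 | 0,2,1,3 => -1 | 0,2,3,1 => 1 | 0,3,1,2 => 1 | 0,3,2,1 => -1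
  | 1,0,2,3 => -1 | 1,0,3,2 => 1 | 1,2,0,3 => 1 | 1,2,3,0 => -1 | 1,3,0,2 => -1 | 1,3,2,0 => 1
  | 2,0,1,3 => 1 | 2,0,3,1 => -1 | 2,1,0,3 => -1 | 2,1,3,0 => 1 | 2,3,0,1 => 1 | 2,3,1,0 => -1
  | 3,0,1,2 => -1 | 3,0,2,1 => 1 | 3,1,0,2 => 1 | 3,1,2,0 => -1 | 3,2,0,1 => -1 | 3,2,1,0 => 1
  | _,_,_,_ => 0 end.

Section FrameAlgebra.
Variable K : numClosedFieldType.

Lemma vol_levi_civita (a b c d : idx) : vol K a b c d = (levi_civita a b c d)%:~R.
Proof.
rewrite /vol (_ : \matrix_(i, j) _ = \matrix_(i < 4, j < 4)
                  ((val (nth t0 [:: a; b; c; d] i) == j)%:R : K)); last first.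
  by apply/matrixP=> i j; rewrite !mxE.
rewrite (det_mx4 (fun i j => ((val (nth t0 [:: a; b; c; d] i) == j)%:R : K))) /det3 /=.
by elim/idx_cases: a; elim/idx_cases: b; elim/idx_cases: c; elim/idx_cases: d;
   rewrite /=; ring.
Qed.

(* The volume form is alternating: swapping slots 1,2 or 1,3 swaps two rows. *)
Lemma vol_swap12 (a b c d : idx) : vol K a b c d = - vol K b a c d.
Proof.
rewrite /vol -(@det_xrow _ _ o0 o1) //; congr (\det _).
by apply/matrixP=> i j; rewrite !mxE; elim/idx_cases: i; rewrite ?tpermL ?tpermR ?tpermD.
Qed.

Lemma vol_swap13 (a b c d : idx) : vol K a b c d = - vol K c b a d.
Proof.
rewrite /vol -(@det_xrow _ _ o0 o2) //; congr (\det _).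
by apply/matrixP=> i j; rewrite !mxE; elim/idx_cases: i; rewrite ?tpermL ?tpermR ?tpermD.
Qed.

Lemma i_sq : 'i * 'i = -1 :> K.
Proof. by rewrite -expr2 sqrCi. Qed.

Lemma sgn_sq (a : idx) : sgn K a * sgn K a = 1.
Proof. by rewrite /sgn; case: (a == t0); rewrite ?mulrNN mulr1. Qed.

Lemma gmC (a b : idx) : gm K a b = gm K b a.
Proof. by rewrite /gm eq_sym; case: eqP => // ->. Qed.

Lemma sum_gm (f : idx -> K) (a : idx) : \sum_(c < 4) gm K a c * f c = sgn K a * f a.
Proof.
rewrite (bigD1 a) //= big1 ?addr0 => [|c ca]; first by rewrite /gm eqxx.
by rewrite /gm eq_sym (negbTE ca) mul0r.
Qed.

Definition skew_symmetric (F : idx -> idx -> K) := forall a b, F a b = - F b a.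

Definition two_form (f01 f02 f03 f12 f13 f23 : K) (a b : idx) : K :=
  match val a, val b with
  | 0,1 => f01 | 1,0 => - f01 | 0,2 => f02 | 2,0 => - f02 | 0,3 => f03 | 3,0 => - f03
  | 1,2 => f12 | 2,1 => - f12 | 1,3 => f13 | 3,1 => - f13 | 2,3 => f23 | 3,2 => - f23
  | _,_ => 0 end.

Lemma two_form_components (F : idx -> idx -> K) :
  skew_symmetric F ->
  forall a b, F a b = two_form (F o0 o1) (F o0 o2) (F o0 o3) (F o1 o2) (F o1 o3) (F o2 o3) a b.
Proof.
move=> Fskew a b; elim/idx_cases: a; elim/idx_cases: b; rewrite /two_form /=;
  by [apply: self_opp_eq0 | ].
Qed.

Lemma two_formN f01 f02 f03 f12 f13 f23 a b :
  two_form (- f01) (- f02) (- f03) (- f12) (- f13) (- f23) a b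
  = - two_form f01 f02 f03 f12 f13 f23 a b.
Proof. by elim/idx_cases: a; elim/idx_cases: b; rewrite /two_form /= ?opprK ?oppr0. Qed.

Lemma Fstar_two_form f01 f02 f03 f12 f13 f23 a b :
  Fstar (two_form f01 f02 f03 f12 f13 f23) a b
  = two_form f23 (- f13) f12 (- f03) f02 (- f01) a b.
Proof.
rewrite /Fstar !sum4 !vol_levi_civita.
by elim/idx_cases: a; elim/idx_cases: b; rewrite /= /sgn /two_form /=; field.
Qed.

Lemma Fstar_ext (F G : idx -> idx -> K) :
  (forall a b, F a b = G a b) -> forall a b, Fstar F a b = Fstar G a b.
Proof.
move=> FG a b; rewrite /Fstar; congr (_ * _).
by apply: eq_bigr => c _; apply: eq_bigr => d _; rewrite FG.
Qed.

Lemma Fstar_linear (F G : idx -> idx -> K) (k : K) a b :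
  Fstar (fun c d => F c d + k * G c d) a b = Fstar F a b + k * Fstar G a b.
Proof. by rewrite /Fstar !sum4; ring. Qed.

Lemma Fstar_skew (F : idx -> idx -> K) : skew_symmetric (Fstar F).
Proof.
move=> a b; rewrite /Fstar -mulrN -sumrN; congr (_ * _); apply: eq_bigr => c _.
by rewrite -sumrN; apply: eq_bigr => d _; rewrite (vol_swap12 b) mulNr opprK.
Qed.

Lemma Fstar_involutive (F : idx -> idx -> K) :
  skew_symmetric F -> forall a b, Fstar (Fstar F) a b = - F a b.
Proof.
move=> Fskew a b; rewrite (Fstar_ext (Fstar_ext (two_form_components Fskew))).
by rewrite (Fstar_ext (@Fstar_two_form _ _ _ _ _ _)) Fstar_two_form two_formN
   -two_form_components.
Qed.

Lemma calF_skew (F : idx -> idx -> K) : skew_symmetric F -> skew_symmetric (calF F).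
Proof. by move=> Fskew a b; rewrite /calF Fskew Fstar_skew opprD mulrN. Qed.

Lemma Fstar_calF (F : idx -> idx -> K) :
  skew_symmetric F -> forall a b, Fstar (calF F) a b = - 'i * calF F a b.
Proof.
move=> Fskew a b; rewrite /calF Fstar_linear Fstar_involutive //.
by ring: i_sq.
Qed.

Lemma calI_selfdual (F : idx -> idx -> K) :
  skew_symmetric F ->
  forall a b, \sum_(c < 4) \sum_(d < 4) calI K a b c d * calFU F c d = calF F a b.
Proof.
move=> Fskew a b.
have -> : \sum_(c < 4) \sum_(d < 4) calI K a b c d * calFU F c d
  = 4%:R^-1 * ('i * \sum_(c < 4) \sum_(d < 4) vol K a b c d * calFU F c d
     + \sum_(c < 4) gm K a c * \sum_(d < 4) gm K b d * calFU F c d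
     - \sum_(c < 4) gm K b c * \sum_(d < 4) gm K a d * calFU F c d).
  by rewrite /calI !sum4; ring.
have lower2 x y : \sum_(c < 4) gm K x c * \sum_(d < 4) gm K y d * calFU F c d = calF F x y.
  under eq_bigr do rewrite sum_gm.
  by rewrite sum_gm /calFU; ring: (sgn_sq x) (sgn_sq y).
have dual : \sum_(c < 4) \sum_(d < 4) vol K a b c d * calFU F c d
            = 2%:R * Fstar (calF F) a b.
  by rewrite /Fstar /calFU mulrA divff ?mul1r ?pnatr_eq0.
rewrite !lower2 dual Fstar_calF // (calF_skew Fskew b a).
by field: i_sq.
Qed.

Section KillingContractions.
Variables (zeta : idx -> K) (F : idx -> idx -> K).
Hypothesis Fskew : skew_symmetric F.

Lemma lower_zetaU (a : idx) : \sum_(m < 4) gm K a m * zetaU zeta m = zeta a.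
Proof. by rewrite sum_gm /zetaU mulrA sgn_sq mul1r. Qed.

(* zeta^m zeta^r I_mare = -gamma_ae / 4; the volume-form part vanishes since
   eta is antisymmetric in the two slots contracted with zeta. *)
Lemma zeta_calI (a e : idx) :
  \sum_(m < 4) \sum_(r < 4) zetaU zeta m * zetaU zeta r * calI K m a r e
  = - 4%:R^-1 * gam zeta a e.
Proof.
pose V := \sum_(m < 4) \sum_(r < 4) zetaU zeta m * zetaU zeta r * vol K m a r e.
have V0 : V = 0.
  apply: self_opp_eq0; rewrite {1}/V exchange_big -sumrN; apply: eq_bigr => r _.
  rewrite -sumrN; apply: eq_bigr => m _.
  by rewrite (vol_swap13 r) mulrN opprK (mulrC (zetaU zeta r)).
have -> : \sum_(m < 4) \sum_(r < 4) zetaU zeta m * zetaU zeta r * calI K m a r e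
  = 4%:R^-1 * ('i * V
     + (\sum_(m < 4) zetaU zeta m * \sum_(r < 4) gm K m r * zetaU zeta r) * gm K a e
     - (\sum_(m < 4) gm K e m * zetaU zeta m) * \sum_(r < 4) gm K a r * zetaU zeta r).
  by rewrite /V /calI !sum4 (gmC o0 e) (gmC o1 e) (gmC o2 e) (gmC o3 e); ring.
under eq_bigr do rewrite lower_zetaU.
by rewrite V0 !lower_zetaU /gam /lam; ring.
Qed.

Lemma calF_zeta (a : idx) :
  \sum_(m < 4) calF F a m * zetaU zeta m = 2^-1 * sigma zeta F a.
Proof. by rewrite /sigma mulrA mulVf ?pnatr_eq0 ?mul1r. Qed.

Lemma zeta_calF (a : idx) :
  \sum_(m < 4) zetaU zeta m * calF F m a = - 2^-1 * sigma zeta F a.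
Proof.
under eq_bigr do rewrite (calF_skew Fskew) mulrN mulrC.
by rewrite sumrN calF_zeta mulNr.
Qed.

Definition simon_trace (T : idx -> idx -> idx -> idx -> K) (e : idx) : K :=
  \sum_(m < 4) \sum_(r < 4) \sum_(d < 4) T e m r d * zetaU zeta m * calFU F r d.

Definition zeta_pair (T : idx -> idx -> idx -> idx -> K) (a e : idx) : K :=
  \sum_(m < 4) \sum_(r < 4) zetaU zeta m * zetaU zeta r * T m a r e.

Lemma simonOfE (T : idx -> idx -> idx -> idx -> K) (a b c : idx) :
  simonOf zeta F T a b c
  = 2^-1 * (gam zeta a b * simon_trace T c - gam zeta a c * simon_trace T b)
    + 2%:R * (zeta_pair T a c * sigma zeta F b - zeta_pair T a b * sigma zeta F c).
Proof.
have pull e f :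
    \sum_(m < 4) \sum_(r < 4) zetaU zeta m * zetaU zeta r * T m a r e * sigma zeta F f
    = zeta_pair T a e * sigma zeta F f.
  by rewrite /zeta_pair mulr_suml; apply: eq_bigr => m _; rewrite mulr_suml.
rewrite /simonOf /= !pull -/(simon_trace T c) -/(simon_trace T b).
by field.
Qed.

Lemma simonOf_linear (T1 T2 : idx -> idx -> idx -> idx -> K) (k : K) (a b c : idx) :
  simonOf zeta F (fun a b c d => T1 a b c d + k * T2 a b c d) a b c
  = simonOf zeta F T1 a b c + k * simonOf zeta F T2 a b c.
Proof.
have trace_lin e : simon_trace (fun a b c d => T1 a b c d + k * T2 a b c d) e
                   = simon_trace T1 e + k * simon_trace T2 e.
  by rewrite /simon_trace !sum4; ring.
have pair_lin e : zeta_pair (fun a b c d => T1 a b c d + k * T2 a b c d) a e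
                  = zeta_pair T1 a e + k * zeta_pair T2 a e.
  by rewrite /zeta_pair !sum4; ring.
by rewrite !simonOfE !trace_lin !pair_lin; ring.
Qed.

Lemma simon_trace_calQ (e : idx) :
  simon_trace (calQ F) e = 2%:R * sigma zeta F e * FdotF F.
Proof.
have -> : simon_trace (calQ F) e
  = 6%:R * (\sum_(m < 4) calF F e m * zetaU zeta m)
      * (\sum_(r < 4) \sum_(d < 4) calF F r d * calFU F r d)
    - 2%:R * FdotF F * \sum_(m < 4)
        (\sum_(r < 4) \sum_(d < 4) calI K e m r d * calFU F r d) * zetaU zeta m.
  by rewrite /simon_trace /calQ !sum4; field.
under [X in _ - _ * X]eq_bigr do rewrite calI_selfdual //.
by rewrite -/(FdotF F) !calF_zeta; field.
Qed.

Lemma zeta_pair_calQ (a e : idx) :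
  zeta_pair (calQ F) a e
  = 3%:R * 2^-1 * sigma zeta F a * sigma zeta F e + 2^-1 * gam zeta a e * FdotF F.
Proof.
have -> : zeta_pair (calQ F) a e
  = 6%:R * (\sum_(m < 4) zetaU zeta m * calF F m a)
      * (\sum_(r < 4) zetaU zeta r * calF F r e)
    - 2%:R * FdotF F
      * \sum_(m < 4) \sum_(r < 4) zetaU zeta m * zetaU zeta r * calI K m a r e.
  by rewrite /zeta_pair /calQ !sum4; field.
by rewrite !zeta_calF zeta_calI; field.
Qed.

Lemma simon_calQ (a b c : idx) : simonOf zeta F (calQ F) a b c = 0.
Proof. by rewrite simonOfE !simon_trace_calQ !zeta_pair_calQ; field. Qed.
End KillingContractions.
End FrameAlgebra.

Theorem mainTheorem8 (K : numClosedFieldType)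
  (zeta : idx -> K) (F : idx -> idx -> K) (W : idx -> idx -> idx -> idx -> K)
  (sigma' : K) :
  real_vec zeta -> F_real_antisym F -> is_weyl W ->
  sigma' != 0 ->
  forall a b c : idx,
    SimonTensor zeta F W a b c = simonOf zeta F (MarsSimon F W sigma') a b c.
Proof.
move=> _ F_real_skew _ _ a b c.
have Fskew : skew_symmetric F by move=> x y; case: (F_real_skew x y).
by rewrite /SimonTensor /MarsSimon (simonOf_linear zeta F (calC W) (calQ F))
   simon_calQ // mulr0 addr0.
Qed.
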